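(* Let $G$ be a finite abelian group of order $N$, and let $e = \exp G$ be the exponent of $G$, that is, the least common multiple of the orders of the elements of $G$. For $1 \leq r \leq N$, define \[D(N, e, r) = \{d_1 d_2 \mid d_1 \in D(N/e),\ d_2 \in D(e),\ d_1 e \geq r\},\] where $D(n)$ denotes the set of positive divisors of $n$. Then for every $1 \le r \le N$, \[\rho_G^-(r) \leq \min_{d \in D(N, e, r)} d \left(2\left\lceil\frac{r}{d}\right\rceil - 1\right).\]
   Context: For a finite abelian group $(G,+)$ of order $N$ and subsets $A, B \subseteq G$, write $A - B = \{a - b \mid a \in A, b \in B\}$. For $1 \le r \le N$ define $\rho^-_G(r) = \min \{|A - A| \mid A \subseteq G, |A| = r\}$. *)

From mathcomp Require Import all_boot all_order all_algebra all_fingroup all_solvable.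
Set Implicit Arguments. Unset Strict Implicit. Unset Printing Implicit Defensive.
Import GRing.Theory.

Definition diffset (G : finZmodType) (A B : {set G}) : {set G} :=
  [set (a - b)%R | a in A, b in B].

(* rho^-_G(r) = min { |A - A| : A subset G, |A| = r }.
   The neutral element #|G| of the minimum is harmless: |A - A| <= |G|. *)
Definition rho_minus (G : finZmodType) (r : nat) : nat :=
  \big[minn/#|G|]_(A : {set G} | #|A| == r) #|diffset A A|.

Definition expG (G : finZmodType) : nat := exponent [set: (G : finGroupType)].

Definition Dset (N e r : nat) : seq nat :=
  [seq d1 * d2 | d1 <- [seq d <- divisors (N %/ e) | r <= d * e], d2 <- divisors e].

Definition ceil_div (a b : nat) : nat := (a + b - 1) %/ b.

(* min_{d in D(N,e,r)} d (2 ceil(r/d) - 1); D(N,e,r) is nonempty (contains N),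
   so the neutral element (here the value at d = N) does not matter. *)
Definition bound (N e r : nat) : nat :=
  \big[minn/N * (2 * ceil_div r N - 1)]_(d <- Dset N e r) (d * (2 * ceil_div r d - 1)).

From mathcomp Require Import all_boot all_order all_algebra all_fingroup all_solvable.
From mathcomp Require Import zify.
Set Implicit Arguments. Unset Strict Implicit. Unset Printing Implicit Defensive.
Import Order.TTheory GRing.Theory.

(* Write d = d1 d2 with d1 | N/e and d2 | e, and let k = ceil(r/d). Pick x of
   order e; since <[x]> has a complement K, there is a subgroup H of order d,
   generated by a subgroup of K of order d1 and by (e/d2) x, which meets <[x]>
   exactly in the multiples of (e/d2) x. As r <= d1 e gives k <= e/d2, the
   cosets H + i x (0 <= i < k) are disjoint, so B = H + {0, x, ..., (k-1) x}
   has d k >= r elements, while B - B lies in a translate of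
   H + {0, x, ..., (2k-2) x} and has at most d (2k-1) elements. Any r-subset A
   of B satisfies |A - A| <= |B - B|. *)

Local Open Scope group_scope.

Lemma abelian_subgroup_of_order (gT : finGroupType) (G : {group gT}) d :
  abelian G -> d %| #|G| -> exists2 H : {group gT}, H \subset G & #|H| = d.
Proof.
elim/ltn_ind: d gT G => d IHd gT G cG dvd_dG.
have d_gt0 : 0 < d by apply: dvdn_gt0 dvd_dG.
have [d_le1 | d_gt1] := leqP d 1.
  exists 1%G; first exact: sub1G.
  by rewrite cards1; apply/eqP; rewrite eqn_leq d_le1 d_gt0.
have p_pr := pdiv_prime d_gt1; have dvd_pd := pdiv_dvd d; set p := pdiv d in p_pr dvd_pd.
have [y Gy oy] := Cauchy p_pr (dvdn_trans dvd_pd dvd_dG).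
have sYG : <[y]> \subset G by rewrite cycle_subG.
have nsYG : <[y]> <| G by rewrite -sub_abelian_normal.
have def_d : d = (p * (d %/ p))%N by rewrite mulnC divnK.
have dvd_dQ : d %/ p %| #|G / <[y]>|.
  rewrite -(@dvdn_pmul2l p) ?prime_gt0 // -def_d card_quotient ?normal_norm //.
  by rewrite -oy orderE Lagrange.
have [L sLQ oL] := IHd _ (ltn_Pdiv (prime_gt1 p_pr) d_gt0) _ _ (quotient_abelian _ cG) dvd_dQ.
exists (coset <[y]> @*^-1 L)%G; first by rewrite /= sub_cosetpre_quo.
by rewrite /= card_cosetpre oL -orderE oy -def_d.
Qed.

Lemma expg_mem_cycleX (gT : finGroupType) (x : gT) a m :
  a %| #[x] -> x ^+ m \in <[x ^+ a]> -> a %| m.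
Proof.
move=> dvd_ax /cycleP[j]; rewrite -expgM => /eqP; rewrite eq_expg_mod_order.
by move/eqP/(congr1 (modn^~ a)); rewrite !modn_dvdm // modnMr => /eqP.
Qed.

Lemma abelian_subgroup_cutting_cycle (gT : finGroupType) (G : {group gT}) d1 d2 :
    abelian G -> d1 %| #|G| %/ exponent G -> d2 %| exponent G ->
  exists x : gT, exists H : {group gT},
    [/\ #[x] = exponent G, #|H| = (d1 * d2)%N
      & <[x]> :&: H = <[x ^+ (exponent G %/ d2)]>].
Proof.
move=> cG dvd_d1 dvd_d2.
have [x Gx ex] := exponent_witness (abelian_nil cG).
have /splitsP[K /complP[tiXK defG]] := abelian_splits Gx (esym ex) cG.
set e := exponent G in dvd_d1 dvd_d2 ex *.
have sKG : K \subset G by rewrite -defG mulG_subr.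
have oK : #|K| = (#|G| %/ e)%N.
  by rewrite -defG TI_cardMg //= -orderE -ex mulKn ?exponent_gt0.
have [H1 sH1K oH1] : exists2 H1 : {group gT}, H1 \subset K & #|H1| = d1.
  by apply: abelian_subgroup_of_order (abelianS sKG cG) _; rewrite oK.
have oC : #[x ^+ (e %/ d2)] = d2.
  by rewrite orderXdiv -ex ?dvdn_div // divnA // mulKn ?exponent_gt0.
have sCX : <[x ^+ (e %/ d2)]> \subset <[x]> := cycleX x _.
have sCG : <[x ^+ (e %/ d2)]> \subset G by rewrite (subset_trans sCX) ?cycle_subG.
have cH1C : <[x ^+ (e %/ d2)]> \subset 'C(H1).
  exact: sub_abelian_cent2 cG sCG (subset_trans sH1K sKG).
have tiXH1 : <[x]> :&: H1 = 1 by apply/trivgP; rewrite -tiXK setIS.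
exists x, (H1 <*> <[x ^+ (e %/ d2)]>)%G; rewrite /= cent_joinEr //=; split=> //.
  rewrite TI_cardMg ?oH1 -?orderE ?oC //.
  by apply/trivgP; rewrite -tiXH1 setIC setIS.
by rewrite -group_modr // tiXH1 mul1g.
Qed.

Local Close Scope group_scope.

Lemma bigminn_le_cond (I : finType) (P : pred I) (F : I -> nat) n j :
  P j -> \big[minn/n]_(i | P i) F i <= F j.
Proof. by move=> Pj; have := bigmin_le_cond n F Pj; rewrite minEnat leEnat. Qed.

Lemma subset_of_card (T : finType) (B : {set T}) r :
  r <= #|B| -> exists2 A : {set T}, A \subset B & #|A| = r.
Proof.
move=> le_rB; exists [set y in take r (enum B)].
  by apply/subsetP=> y; rewrite inE => /mem_take; rewrite mem_enum.
rewrite cardsE /= (card_uniqP _) ?take_uniq ?enum_uniq // size_takel //.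
by rewrite -cardE.
Qed.

Section DifferenceSets.

Variable G : finZmodType.
Implicit Types (A B : {set G}) (x : G) (k : nat).

Lemma diffsetS A B : A \subset B -> diffset A A \subset diffset B B.
Proof. by move=> sAB; apply: imset2S. Qed.

Lemma rho_minus_le_card_diffset B r : r <= #|B| -> rho_minus G r <= #|diffset B B|.
Proof.
case/subset_of_card=> A sAB <-; apply: leq_trans (subset_leq_card (diffsetS sAB)).
exact: bigminn_le_cond.
Qed.

Definition sumset_progression (H : {set G}) x k : {set G} :=
  [set (h + x *+ (i : 'I_k))%R | h in H, i in [set: 'I_k]].

Lemma card_sumset_progression_le (H : {set G}) x k :
  #|sumset_progression H x k| <= #|H| * k.
Proof.
rewrite /sumset_progression curry_imset2X (leq_trans (leq_imset_card _ _)) //.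
by rewrite cardsX cardsT card_ord.
Qed.

Variable H : {group G}.

Lemma groupB_zmod h1 h2 : h1 \in H -> h2 \in H -> (h1 - h2)%R \in H.
Proof. by move=> Hh1 Hh2; rewrite -FinRing.zmodVgE -FinRing.zmodMgE groupM ?groupV. Qed.

Lemma card_sumset_progression x k :
    (forall m, 0 < m < k -> (x *+ m)%R \notin H) ->
  #|sumset_progression H x k| = #|H| * k.
Proof.
move=> xmH; rewrite /sumset_progression curry_imset2X card_in_imset.
  by rewrite cardsX cardsT card_ord.
have no_collision h1 h2 (i j : 'I_k) : h1 \in H -> h2 \in H -> i < j ->
    (h1 + x *+ i <> h2 + x *+ j)%R.
  move=> Hh1 Hh2 lt_ij; rewrite -(subnKC (ltnW lt_ij)) mulrnDr addrA addrAC => /addIr eq_h.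
  suff : (x *+ (j - i))%R \in H by apply/negP/xmH; have := ltn_ord j; lia.
  have -> : (x *+ (j - i))%R = (h1 - h2)%R by rewrite eq_h addrAC subrr add0r.
  exact: groupB_zmod.
move=> [h1 i] [h2 j]; rewrite !inE /= !andbT => Hh1 Hh2 eq_ij.
have [lt_ij | lt_ji | /val_inj eq_ij'] := ltngtP i j.
- by case: (no_collision _ _ _ _ Hh1 Hh2 lt_ij eq_ij).
- by case: (no_collision _ _ _ _ Hh2 Hh1 lt_ji (esym eq_ij)).
- by move: eq_ij; rewrite eq_ij' => /addIr ->.
Qed.

Lemma diffset_sumset_progression x k :
  diffset (sumset_progression H x k) (sumset_progression H x k)
    \subset [set (y - x *+ k.-1)%R | y in sumset_progression H x (2 * k - 1)].
Proof.
apply/subsetP=> _ /imset2P[_ _ /imset2P[h1 i Hh1 _ ->] /imset2P[h2 j Hh2 _ ->] ->].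
have lt_ijk : i + k.-1 - j < 2 * k - 1 by have := ltn_ord i; have := ltn_ord j; lia.
apply/imsetP; exists (h1 - h2 + x *+ Ordinal lt_ijk)%R.
  by apply/imset2P; exists (h1 - h2)%R (Ordinal lt_ijk); rewrite ?inE ?groupB_zmod.
have le_jk : j <= k.-1 by have := ltn_ord j; lia.
rewrite /= -addnBA // mulrnDr -{2}(subnK le_jk) mulrnDr.
by rewrite !opprD !addrA addrK (addrAC h1).
Qed.

Lemma card_diffset_sumset_progression_le x k :
  #|diffset (sumset_progression H x k) (sumset_progression H x k)| <= #|H| * (2 * k - 1).
Proof.
apply: leq_trans (subset_leq_card (diffset_sumset_progression x k)) _.
exact: leq_trans (leq_imset_card _ _) (card_sumset_progression_le _ _ _).
Qed.

Lemma rho_minus_le_sumset_progression x k r :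
    (forall m, 0 < m < k -> (x *+ m)%R \notin H) -> r <= #|H| * k ->
  rho_minus G r <= #|H| * (2 * k - 1).
Proof.
move=> xmH le_r; apply: leq_trans (card_diffset_sumset_progression_le x k).
by apply: rho_minus_le_card_diffset; rewrite card_sumset_progression.
Qed.

End DifferenceSets.

Lemma expG_dvdn_card (G : finZmodType) : expG G %| #|G|.
Proof. by rewrite /expG -cardsT exponent_dvdn. Qed.

Lemma leq_mul_ceil_div r d : 0 < d -> r <= d * ceil_div r d.
Proof.
move=> d_gt0; rewrite /ceil_div.
have := divn_eq (r + d - 1) d; have := ltn_pmod (r + d - 1) d_gt0; lia.
Qed.

Lemma ceil_div_leq r d q : 0 < d -> r <= d * q -> ceil_div r d <= q.
Proof. by move=> d_gt0 le_r; rewrite /ceil_div -ltnS ltn_divLR // mulSn; lia. Qed.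

Lemma mem_Dset_self N e r : 0 < N -> e %| N -> r <= N -> N \in Dset N e r.
Proof.
move=> N_gt0 dvd_eN le_rN; have e_gt0 : 0 < e by apply: dvdn_gt0 dvd_eN.
have Ne_gt0 : 0 < N %/ e by rewrite divn_gt0 // dvdn_leq.
apply/allpairsP; exists (N %/ e, e); rewrite /= divnK //.
by rewrite mem_filter divnK // le_rN !divisors_id.
Qed.

Lemma rho_minus_le_Dset (G : finZmodType) r d :
  d \in Dset #|G| (expG G) r -> rho_minus G r <= d * (2 * ceil_div r d - 1).
Proof.
have e_gt0 : 0 < expG G := exponent_gt0 _.
have Ne_gt0 : 0 < #|G| %/ expG G.
  by rewrite divn_gt0 // dvdn_leq ?expG_dvdn_card // -cardsT cardG_gt0.
case/allpairsP=> -[d1 d2] [/= d1_in d2_in ->].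
move: d1_in d2_in; rewrite mem_filter -!dvdn_divisors // => /andP[le_r dvd_d1] dvd_d2.
have d_gt0 : 0 < d1 * d2 by rewrite muln_gt0 (dvdn_gt0 Ne_gt0 dvd_d1) (dvdn_gt0 e_gt0 dvd_d2).
rewrite -cardsT in dvd_d1.
have [x [H [ox oH tiXH]]] :=
  abelian_subgroup_cutting_cycle (FinRing.zmod_abelian [set: G]) dvd_d1 dvd_d2.
set k := ceil_div r (d1 * d2).
have le_k : k <= expG G %/ d2.
  by apply: ceil_div_leq; rewrite // -mulnA [d2 * _]mulnC divnK.
rewrite -oH; apply: (@rho_minus_le_sumset_progression _ H x); last first.
  by rewrite oH leq_mul_ceil_div.
move=> m /andP[m_gt0 lt_mk]; apply/negP => xmH.
have : expG G %/ d2 %| m.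
  apply: (@expg_mem_cycleX _ x); first by rewrite ox dvdn_div.
  by rewrite -tiXH inE mem_cycle FinRing.zmodXgE.
by move/(dvdn_leq m_gt0); lia.
Qed.

Theorem mainTheorem1 (G : finZmodType) (r : nat) :
  1 <= r <= #|G| -> rho_minus G r <= bound #|G| (expG G) r.
Proof.
case/andP=> _ le_rN; rewrite /bound big_seq.
apply: (big_ind (leq (rho_minus G r))) => [|m n le_m le_n|d]; last exact: rho_minus_le_Dset.
  apply/rho_minus_le_Dset/mem_Dset_self; rewrite ?expG_dvdn_card //.
  by rewrite -cardsT cardG_gt0.
by rewrite leq_min le_m.
Qed.
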